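(* Let $(X,\alpha,T)$ be a dynamical system, $T$ a semigroup with identity acting on a compact metrizable space $X$ by continuous surjections, and let $T=T_1\cup\cdots\cup T_k$ be a decomposition into finitely many subsemigroups. If each $E(X,T_i)$ is completely regular, then $E(X,T)$ is completely regular.
   Context: $E(X,S)$ for $S\subset T$ denotes the closure of $\{\alpha^t:t\in S\}$ in $X^X$ with the topology of pointwise convergence; these are semigroups under composition. A semigroup is completely regular if each element $a$ admits $x$ with $a=axa$, $ax=xa$. *)

From HB Require Import structures.
From mathcomp Require Import all_boot all_order all_algebra.
From mathcomp Require Import all_classical all_reals all_analysis.
Set Implicit Arguments. Unset Strict Implicit. Unset Printing Implicit Defensive.
Local Open Scope classical_set_scope.

Definition is_monoid (T : Type) (mul : T -> T -> T) (e : T) : Prop :=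
  (forall a b c, mul a (mul b c) = mul (mul a b) c) /\
  (forall a, mul e a = a) /\ (forall a, mul a e = a).

Definition subsemigroup (T : Type) (mul : T -> T -> T) (S : set T) : Prop :=
  forall a b, S a -> S b -> S (mul a b).

Definition cont_surj_action (T : Type) (mul : T -> T -> T) (e : T)
    (X : topologicalType) (alpha : T -> X -> X) : Prop :=
  alpha e = id /\
  (forall s t, alpha (mul s t) = alpha s \o alpha t) /\
  (forall t, continuous (alpha t)) /\
  (forall t (y : X), exists x, alpha t x = y).

Definition Env (T : Type) (X : topologicalType) (alpha : T -> X -> X)
    (S : set T) : set (X -> X) :=
  @closure {ptws X -> X} (alpha @` S).

Definition completely_regular (X : Type) (E : set (X -> X)) : Prop :=
  forall a, E a -> exists2 x, E x & a = a \o x \o a /\ a \o x = x \o a.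

(* Closure commutes with finite unions, so E(X,T) is the union of the
   E(X,T_i); an element of E(X,T_i) finds its witness x in E(X,T_i), which
   lies in E(X,T). *)
From HB Require Import structures.
From mathcomp Require Import all_boot all_order all_algebra.
From mathcomp Require Import all_classical all_reals all_analysis.
Local Open Scope classical_set_scope.

Lemma closure_bigcup (T : topologicalType) (I : finType) (A : I -> set T) :
  closure (\bigcup_(i in [set: I]) A i) = \bigcup_(i in [set: I]) closure (A i).
Proof.
have -> : [set: I] = [set` enum I].
  by apply/seteqP; split=> i //= _; rewrite mem_enum.
by rewrite !bigcup_seq; apply: (big_morph _ (@closureU T) (@closure0 T)).
Qed.

Lemma Env_bigcup (T : Type) (X : topologicalType) (alpha : T -> X -> X)
    (I : finType) (S : I -> set T) :
  Env alpha (\bigcup_(i in [set: I]) S i) =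
  \bigcup_(i in [set: I]) Env alpha (S i).
Proof. by rewrite /Env image_bigcup closure_bigcup. Qed.

Lemma completely_regular_bigcup (X I : Type) (P : set I)
    (E : I -> set (X -> X)) :
  (forall i, P i -> completely_regular (E i)) ->
  completely_regular (\bigcup_(i in P) E i).
Proof.
move=> regE a [i Pi Eia].
have [x Eix ax] := regE i Pi a Eia.
by exists x => //; exists i.
Qed.

Theorem corollary3p3 (R : realType) (X : pseudoMetricType R)
  (hX : hausdorff_space X) (cX : compact [set: X])
  (T : Type) (mul : T -> T -> T) (e : T) (hT : is_monoid mul e)
  (alpha : T -> X -> X) (halpha : cont_surj_action mul e alpha)
  (k : nat) (Ti : 'I_k -> set T)
  (hsub : forall i, subsemigroup mul (Ti i))
  (hcover : \bigcup_(i in [set: 'I_k]) Ti i = [set: T])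
  (hreg : forall i, completely_regular (Env alpha (Ti i))) :
  completely_regular (Env alpha [set: T]).
Proof.
rewrite -hcover Env_bigcup.
by apply: completely_regular_bigcup => i _; apply: hreg.
Qed.
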